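(* For every finite field extension $\mathbb{K}/\mathbb{Q}$ with $\mathbb{K}$ real (embeddable in $\mathbb{R}$), there exists a finite set $\mathcal{I}$ of CI constraints such that the semidefinite model $\mathcal{K}^-_{\mathbb{R}}(\mathcal{I})$ is non-empty and for every $\Sigma\in\mathcal{K}^-_{\mathbb{R}}(\mathcal{I})$ the subfield of $\mathbb{R}$ generated by the entries of $\Sigma$ admits a field embedding of $\mathbb{K}$. That is, all real algebraic numbers are necessary to witness the non-emptiness of (semidefinite) Gaussian CI models.
   Context: Let $\mathsf{N}$ be a finite ground set. A CI statement is a symbol $(\mathsf{ij}|\mathsf{K})$ with $\mathsf{i}\neq\mathsf{j}\in\mathsf{N}$, $\mathsf{K}\subseteq\mathsf{N}\setminus\{\mathsf{i},\mathsf{j}\}$. For a symmetric matrix $\Sigma$ write $[\mathsf{L}:\Sigma]=\det\Sigma_{\mathsf{L}}$ (with $\det$ of the empty matrix equal to $1$) and $[\mathsf{ij}|\mathsf{L}:\Sigma]=\det\Sigma_{\mathsf{i}\mathsf{L},\mathsf{j}\mathsf{L}}$. For a real positive-semidefinite symmetric $\Sigma$, the statement $(\mathsf{ij}|\mathsf{K})$ holds iff $[\mathsf{ij}|\mathsf{L}:\Sigma]=0$ for a subset $\mathsf{L}\subseteq\mathsf{K}$ with $[\mathsf{L}:\Sigma]\neq0$ and $\operatorname{rk}\Sigma_{\mathsf{L}}=\operatorname{rk}\Sigma_{\mathsf{K}}$ (this does not depend on the choice of such $\mathsf{L}$). A set of CI constraints $\mathcal{I}$ consists of statements $(\mathsf{ij}|\mathsf{K})$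 and negations $\neg(\mathsf{ij}|\mathsf{K})$, the latter holding iff the statement does not hold. The semidefinite model $\mathcal{K}^-_{\mathbb{R}}(\mathcal{I})$ is the set of all real positive-semidefinite symmetric $\mathsf{N}\times\mathsf{N}$ matrices satisfying all constraints in $\mathcal{I}$ in this sense. *)

From HB Require Import structures.
From mathcomp Require Import all_boot all_order all_algebra all_field.
From mathcomp Require Import reals.
Set Implicit Arguments. Unset Strict Implicit. Unset Printing Implicit Defensive.
Import Order.TTheory GRing.Theory Num.Theory.
Local Open Scope ring_scope.

(* Ground set N = 'I_n.  A CI constraint is (b, i, j, K):
   b = true  : the statement (ij|K);  b = false : its negation. *)
Definition ci_constraint (n : nat) : Type :=
  (bool * 'I_n * 'I_n * {set 'I_n})%type.

Definition ci_wf n (c : ci_constraint n) : bool :=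
  let: (_, i, j, K) := c in [&& i != j, i \notin K & j \notin K].

Definition princ_sub (R : pzRingType) n (S : 'M[R]_n) (L : {set 'I_n})
  : 'M[R]_#|L| :=
  \matrix_(a < #|L|, b < #|L|) S (enum_val a) (enum_val b).

Definition ext_index n (i : 'I_n) (L : {set 'I_n}) (a : 'I_(1 + #|L|)) : 'I_n :=
  match split a with inl _ => i | inr b => enum_val b end.

Definition almost_princ_sub (R : pzRingType) n (S : 'M[R]_n) (i j : 'I_n)
  (L : {set 'I_n}) : 'M[R]_(1 + #|L|) :=
  \matrix_(a < 1 + #|L|, b < 1 + #|L|) S (@ext_index n i L a) (@ext_index n j L b).

Definition minorL (R : comPzRingType) n (S : 'M[R]_n) L := \det (princ_sub S L).
Definition minor_ijL (R : comPzRingType) n (S : 'M[R]_n) i j L :=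
  \det (almost_princ_sub S i j L).

Definition ci_holds (R : fieldType) n (S : 'M[R]_n) (i j : 'I_n)
  (K : {set 'I_n}) : Prop :=
  exists L : {set 'I_n},
    [/\ L \subset K, minorL S L != 0,
        \rank (princ_sub S L) = \rank (princ_sub S K) & minor_ijL S i j L = 0].

Definition constraint_holds (R : fieldType) n (S : 'M[R]_n)
  (c : ci_constraint n) : Prop :=
  let: (b, i, j, K) := c in
  if b then ci_holds S i j K else ~ ci_holds S i j K.

Definition psd (R : realType) n (S : 'M[R]_n) : Prop :=
  S^T = S /\ forall v : 'cV[R]_n, 0 <= (v^T *m S *m v) 0 0.

Definition in_sd_model (R : realType) n (I : seq (ci_constraint n))
  (S : 'M[R]_n) : Prop :=
  psd S /\ forall c, c \in I -> constraint_holds S c.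

Definition in_gen_subfield (R : fieldType) (A : R -> Prop) (x : R) : Prop :=
  forall P : R -> Prop,
    P 1 ->
    (forall y z, P y -> P z -> P (y - z)) ->
    (forall y z, P y -> P z -> P (y * z)) ->
    (forall y, P y -> P y^-1) ->
    (forall y, A y -> P y) ->
    P x.

Definition entries (R : Type) n (S : 'M[R]_n) : R -> Prop :=
  fun x => exists i j, S i j = x.

From HB Require Import structures.
From mathcomp Require Import all_boot all_order all_algebra all_field.
From mathcomp Require Import reals boolp ring.
Set Implicit Arguments. Unset Strict Implicit. Unset Printing Implicit Defensive.
Import Order.TTheory GRing.Theory Num.Theory.
Local Open Scope ring_scope.

(* Fix a Q-basis B of K with structure constants B_i B_c = \sum_a M_ica B_a,
   and clear denominators: N = D M has integer entries.  The constraints force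
   a set of "hub" variables to be pairwise uncorrelated and nondegenerate.
   Conditioning on such a set is iterated regression, so after normalizing by
   a node [Top] every statement (u v | A) with A a set of hubs reads
   s(u,v) = m \sum_(h in A) z(u,h) z(v,h), where z(u,h) = s(u,h) / s(Top,h).
   The coordinates x_a and y_ic of a node [Point] on hubs indexed by basis
   elements and by pairs are then forced to satisfy D y_ic = \sum_a N_ica x_a
   (an integer coefficient k is the number of repeated unit hubs in a
   conditioning set) and x_c y_ic' = x_c' y_ic.  Hence the functional
   L(w) = \sum_a coord_a(w) x_a satisfies L(u w) = Lam(u) L(w), and
   w |-> L(w) / L(1) embeds K into the field generated by the entries.
   Conversely, an embedding phi gives x_a = phi(B_a), y_ic = phi(B_i B_c), and
   a Gram matrix with orthonormal hubs and prescribed covariances between the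
   other nodes satisfies every constraint. *)

(** * Conditioning on uncorrelated variables *)

Lemma det_block_mx_schur (R : comNzRingType) k (a : R) (r : 'rV_k) (c : 'cV_k)
    (D D' : 'M_k) :
  D *m D' = 1%:M -> \det (block_mx a%:M r c D) = (a - (r *m D' *m c) 0 0) * \det D.
Proof.
move=> DD'.
have -> : block_mx a%:M r c D =
    block_mx (a%:M - r *m D' *m c) r 0 D *m block_mx 1%:M 0 (D' *m c) 1%:M.
  rewrite mulmx_block !mulmx0 !mulmx1 ?mul0mx ?add0r ?addr0.
  by rewrite [D *m _]mulmxA DD' mul1mx [r *m (D' *m c)]mulmxA subrK.
rewrite det_mulmx det_ublock det_lblock !det1 mulr1 det_mx11.
by rewrite !mxE eqxx mulr1n mulr1.
Qed.

Lemma almost_princ_subE (R : pzRingType) n (S : 'M[R]_n) i j K :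
  almost_princ_sub S i j K =
  block_mx (S i j)%:M (\row_b S i (enum_val b)) (\col_a S (enum_val a) j)
    (princ_sub S K).
Proof.
apply/matrixP => a b; rewrite -(splitK a) -(splitK b).
case: (split a) => a'; case: (split b) => b';
  rewrite mxE /ext_index !unsplitK /=.
- by rewrite block_mxEul [a']ord1 [b']ord1 mxE eqxx mulr1n.
- by rewrite (@block_mxEur _ 1 #|K| 1 #|K|) mxE.
- by rewrite (@block_mxEdl _ 1 #|K| 1 #|K|) mxE.
- by rewrite (@block_mxEdr _ 1 #|K| 1 #|K|) mxE.
Qed.

Section OrthogonalConditioning.
Variables (F : fieldType) (n : nat) (S : 'M[F]_n) (K : {set 'I_n}).
Hypothesis S_orth : {in K &, forall h h', h != h' -> S h h' = 0}.
Hypothesis S_diag_neq0 : {in K, forall h, S h h != 0}.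

Lemma princ_sub_orth : princ_sub S K = diag_mx (\row_b S (enum_val b) (enum_val b)).
Proof.
apply/matrixP => a b; rewrite !mxE.
have [<-|ab] := eqVneq a b; first by rewrite mulr1n.
by rewrite mulr0n S_orth ?enum_valP // (inj_eq enum_val_inj).
Qed.

Lemma minorL_orth : minorL S K = \prod_(h in K) S h h.
Proof.
rewrite /minorL princ_sub_orth det_diag (big_enum_val (fun h => S h h)).
by apply: eq_bigr => b _; rewrite mxE.
Qed.

Lemma minorL_orth_neq0 : minorL S K != 0.
Proof. by rewrite minorL_orth; apply/prodf_neq0 => h; apply: S_diag_neq0. Qed.

Lemma minor_ijL_orth i j : minor_ijL S i j K =
  (S i j - \sum_(h in K) S i h * S h j / S h h) * minorL S K.
Proof.
pose D' := diag_mx (\row_b (S (enum_val b) (enum_val b))^-1 : 'rV_#|K|).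
have DD' : princ_sub S K *m D' = 1%:M.
  rewrite princ_sub_orth mul_mx_diag; apply/matrixP => a b; rewrite !mxE.
  have [<-|ab] := eqVneq a b; last by rewrite !mulr0n mul0r.
  by rewrite mulr1n mulfV // S_diag_neq0 ?enum_valP.
rewrite /minor_ijL almost_princ_subE (det_block_mx_schur _ _ _ DD').
congr ((_ - _) * _); rewrite mul_mx_diag mxE.
rewrite (big_enum_val (fun h => S i h * S h j / S h h)).
by apply: eq_bigr => b _; rewrite !mxE mulrAC.
Qed.

Lemma ci_holds_orthE i j :
  ci_holds S i j K <-> S i j = \sum_(h in K) S i h * S h j / S h h.
Proof.
have rankK : \rank (princ_sub S K) = #|K|.
  by apply: mxrank_unit; rewrite unitmxE unitfE minorL_orth_neq0.
split=> [[L [LK _ rankL minorL0]] | eqS].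
  have eqLK : L = K.
    by apply/eqP; rewrite eqEcard LK /= -rankK -rankL rank_leq_row.
  move: minorL0; rewrite eqLK minor_ijL_orth => /eqP.
  by rewrite mulf_eq0 (negbTE minorL_orth_neq0) orbF subr_eq0 => /eqP.
exists K; split=> //; first exact: minorL_orth_neq0.
by rewrite minor_ijL_orth eqS subrr mul0r.
Qed.

End OrthogonalConditioning.

Lemma ci_holds_set0 (F : fieldType) n (S : 'M[F]_n) i j :
  ci_holds S i j set0 <-> S i j = 0.
Proof. by rewrite ci_holds_orthE ?big_set0 // => h; rewrite inE. Qed.

Lemma ci_holds_set1_neq0 (F : fieldType) n (S : 'M[F]_n) i j h :
  ci_holds S i j [set h] -> S i j != 0 -> S h h != 0.
Proof.
case=> L [+ minorL_neq0 _ minor0]; rewrite subset1 => /orP[] /eqP L_eq Sij_neq0.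
  move: minorL_neq0; rewrite L_eq minorL_orth ?big_set1 // => h1 h2.
  by rewrite !inE => /eqP-> /eqP->; rewrite eqxx.
have set0_orth : {in set0 &, forall h1 h2 : 'I_n, h1 != h2 -> S h1 h2 = 0}.
  by move=> ?; rewrite inE.
have set0_diag : {in set0, forall h1 : 'I_n, S h1 h1 != 0} by move=> ?; rewrite inE.
move: minor0; rewrite L_eq (minor_ijL_orth set0_orth set0_diag) (minorL_orth set0_orth).
by rewrite !big_set0 subr0 mulr1 => /eqP; rewrite (negbTE Sij_neq0).
Qed.

(** * The generated subfield *)

Definition gen_subfield (F : fieldType) (A : F -> Prop) : {pred F} :=
  fun x => `[< in_gen_subfield A x >].

Lemma gen_subfieldP (F : fieldType) (A : F -> Prop) x :
  reflect (in_gen_subfield A x) (x \in gen_subfield A).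
Proof. exact: asboolP. Qed.

Lemma gen_subfield_divring_closed (F : fieldType) (A : F -> Prop) :
  GRing.divring_closed (gen_subfield A).
Proof.
split=> [|x y /gen_subfieldP Gx /gen_subfieldP Gy|x y /gen_subfieldP Gx /gen_subfieldP Gy];
  apply/gen_subfieldP => P P1 PB PM PV PA //.
- by apply: (PB); [exact: (Gx P) | exact: (Gy P)].
- by apply: (PM); [exact: (Gx P) | apply: (PV); exact: (Gy P)].
Qed.

HB.instance Definition _ (F : fieldType) (A : F -> Prop) :=
  GRing.isDivringClosed.Build F (gen_subfield A) (gen_subfield_divring_closed A).

Lemma gen_subfield_entry (F : fieldType) n (S : 'M[F]_n) i j :
  S i j \in gen_subfield (entries S).
Proof. by apply/gen_subfieldP => P _ _ _ _; apply; exists i, j. Qed.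

(** * Hub gadgets and Gram realizations *)

Section Gadget.
Variables (H T : finType).

Definition vertex : finType := (H + T)%type.
Definition gadget_dim := #|{: vertex}|.
Definition vidx (v : vertex) : 'I_gadget_dim := enum_rank v.
Definition hub (h : H) : vertex := inl h.
Definition node (x : T) : vertex := inr x.

Definition ci (b : bool) (u v : vertex) (A : {set H}) : ci_constraint gadget_dim :=
  (b, vidx u, vidx v, [set vidx (hub h) | h in A]).

Lemma ci_wf_hubs b h h' : h != h' -> ci_wf (ci b (hub h) (hub h') set0).
Proof.
by move=> hh'; rewrite /ci_wf /ci (inj_eq enum_rank_inj) (inj_eq inl_inj) hh' imset0 !inE.
Qed.

Lemma ci_wf_node_hub b x h : ci_wf (ci b (node x) (hub h) set0).
Proof. by rewrite /ci_wf /ci (inj_eq enum_rank_inj) imset0 !inE. Qed.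

Lemma ci_wf_nodes b x y A : x != y -> ci_wf (ci b (node x) (node y) A).
Proof.
move=> xy; rewrite /ci_wf /ci (inj_eq enum_rank_inj) (inj_eq inr_inj) xy /=.
by apply/andP; split; apply/imsetP => -[h _] /enum_rank_inj.
Qed.

Section Semantics.
Variables (F : fieldType) (S : 'M[F]_gadget_dim).
Local Notation s u v := (S (vidx u) (vidx v)).

Lemma ci_true0E u v : constraint_holds S (ci true u v set0) <-> s u v = 0.
Proof. by rewrite /constraint_holds /ci imset0 ci_holds_set0. Qed.

Lemma ci_false0E u v : constraint_holds S (ci false u v set0) <-> s u v != 0.
Proof. by rewrite /constraint_holds /ci imset0 ci_holds_set0; split=> /eqP. Qed.

Hypothesis S_hub_orth : forall h h', h != h' -> s (hub h) (hub h') = 0.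
Hypothesis S_hub_diag_neq0 : forall h, s (hub h) (hub h) != 0.

Lemma ci_trueE u v A : constraint_holds S (ci true u v A) <->
  s u v = \sum_(h in A) s u (hub h) * s (hub h) v / s (hub h) (hub h).
Proof.
rewrite /constraint_holds /ci ci_holds_orthE.
- by rewrite big_imset //= => h h' _ _ /enum_rank_inj [].
- move=> _ _ /imsetP[h _ ->] /imsetP[h' _ ->] hh'; apply: S_hub_orth.
  by apply: contraNneq hh' => ->.
- by move=> _ /imsetP[h _ ->].
Qed.

End Semantics.

Section GramRealization.
Variables (R : realType) (X : T -> H -> R) (f : T -> T -> R).

Definition hub_dot (x y : T) := \sum_h X x h * X y h.

(* One coordinate per hub, holding [X], and one per ordered pair of nodes,
   which corrects the inner product of that pair to the prescribed value. *)
Definition gram_coord (r : H + T * T) (w : vertex) : R :=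
  match r, w with
  | inl h, inl h' => (h == h')%:R
  | inl h, inr x => X x h
  | inr _, inl _ => 0
  | inr (k, l), inr x => (x == k)%:R * (f k l - hub_dot k l / 2) + (x == l)%:R
  end.

Definition gram_factor : 'M[R]_(#|{: H + T * T}|, gadget_dim) :=
  \matrix_(r, a) gram_coord (enum_val r) (enum_val a).
Definition gram := gram_factor^T *m gram_factor.
Local Notation s u v := (gram (vidx u) (vidx v)).

Lemma gram_psd : psd gram.
Proof.
split=> [|w]; first by rewrite /gram trmx_mul trmxK.
have -> : w^T *m gram *m w = (gram_factor *m w)^T *m (gram_factor *m w).
  by rewrite /gram trmx_mul !mulmxA.
by rewrite !mxE; apply: sumr_ge0 => r _; rewrite mxE -expr2 sqr_ge0.
Qed.

Lemma gramE u v : s u v = \sum_r gram_coord r u * gram_coord r v.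
Proof.
rewrite !mxE (big_enum_val (fun r => gram_coord r u * gram_coord r v)) /=.
by apply: eq_bigr => r _; rewrite !mxE /vidx !enum_rankK.
Qed.

Lemma sum_indicator (I : finType) (j : I) (c : R) : \sum_i (i == j)%:R * c = c.
Proof. by rewrite (bigD1 j) //= eqxx mul1r big1 ?addr0 // => i /negbTE ->; rewrite mul0r. Qed.

Lemma gram_hubs h h' : s (hub h) (hub h') = (h == h')%:R.
Proof.
rewrite gramE big_sumType /= [Z in _ + Z]big1 ?addr0 => [|[k l] _]; last by rewrite mul0r.
rewrite -[RHS](sum_indicator h); apply: eq_bigr => h'' _ /=.
by have [->|] := eqVneq h'' h; rewrite ?mul0r.
Qed.

Lemma gram_node_hub x h : s (node x) (hub h) = X x h.
Proof.
rewrite gramE big_sumType /= [Z in _ + Z]big1 ?addr0 => [|[k l] _]; last by rewrite mulr0.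
rewrite -[RHS](sum_indicator h); apply: eq_bigr => h'' _ /=.
by have [->|] := eqVneq h'' h; rewrite ?mulr0 ?mul0r ?mulr1 ?mul1r.
Qed.

Lemma gram_sym u v : s u v = s v u.
Proof. by rewrite !gramE; apply: eq_bigr => r _; rewrite mulrC. Qed.

Lemma gram_hub_node x h : s (hub h) (node x) = X x h.
Proof. by rewrite gram_sym gram_node_hub. Qed.

Lemma pair_coord_mul (x y k l : T) (a : R) : x != y ->
  ((x == k)%:R * a + (x == l)%:R) * ((y == k)%:R * a + (y == l)%:R) =
  (((k, l) == (x, y))%:R + ((k, l) == (y, x))%:R) * a.
Proof.
move=> xy; have yx : y != x by rewrite eq_sym.
rewrite !xpair_eqE.
have [<-{k}|xk] := eqVneq x k; have [<-{l}|yl] := eqVneq y l;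
  rewrite ?eqxx ?(negbTE xy) ?(negbTE yx) /=; try by ring.
- by rewrite andbF /=; ring.
- by rewrite (eq_sym k y) (eq_sym l x); case: (y == k); case: (x == l); rewrite /=; ring.
Qed.

Lemma gram_nodes x y : x != y -> s (node x) (node y) = f x y + f y x.
Proof.
move=> xy; rewrite gramE big_sumType /=.
rewrite (eq_bigr (fun p : T * T => (p == (x, y))%:R * (f x y - hub_dot x y / 2)
    + (p == (y, x))%:R * (f y x - hub_dot y x / 2))); last first.
  by case=> k l _ /=; rewrite pair_coord_mul // mulrDl; congr (_ + _);
    have [[-> ->]|] := eqVneq (k, l) _; rewrite ?mul0r.
rewrite big_split /= !sum_indicator.
have -> : hub_dot y x = hub_dot x y by apply: eq_bigr => h _; rewrite mulrC.
by rewrite /hub_dot; field.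
Qed.

Lemma gram_ci_nodesE x y A : x != y ->
  constraint_holds gram (ci true (node x) (node y) A) <->
  f x y + f y x = \sum_(h in A) X x h * X y h.
Proof.
move=> xy; have orth h h' : h != h' -> s (hub h) (hub h') = 0.
  by rewrite gram_hubs => /negbTE->.
have diag h : s (hub h) (hub h) != 0 by rewrite gram_hubs eqxx oner_neq0.
rewrite (ci_trueE orth diag) gram_nodes //.
by under eq_bigr do rewrite gram_node_hub gram_hub_node gram_hubs eqxx divr1.
Qed.

End GramRealization.
End Gadget.
Arguments hub {H T}. Arguments node {H T}.

(** * The realization gadget *)

Inductive coord_hub (d : nat) := XHub of 'I_d | YHub of 'I_d & 'I_d.
Arguments XHub {d}. Arguments YHub {d}.
Definition coord_hub_enc d (h : coord_hub d) : 'I_d + 'I_d * 'I_d :=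
  match h with XHub a => inl a | YHub i c => inr (i, c) end.
Definition coord_hub_dec d (e : 'I_d + 'I_d * 'I_d) : coord_hub d :=
  match e with inl a => XHub a | inr (i, c) => YHub i c end.
Lemma coord_hub_encK d : cancel (@coord_hub_enc d) (@coord_hub_dec d).
Proof. by case. Qed.
Lemma coord_hub_decK d : cancel (@coord_hub_dec d) (@coord_hub_enc d).
Proof. by case=> [|[]]. Qed.
HB.instance Definition _ d := Finite.copy (coord_hub d) (can_type (@coord_hub_encK d)).

Inductive hub_label (d u : nat) := Main of coord_hub d | Unit of 'I_u.
Arguments Main {d u}. Arguments Unit {d u}.
Definition hub_label_enc d u (h : hub_label d u) : coord_hub d + 'I_u :=
  match h with Main h => inl h | Unit j => inr j end.
Definition hub_label_dec d u (e : coord_hub d + 'I_u) : hub_label d u :=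
  match e with inl h => Main h | inr j => Unit j end.
Lemma hub_label_encK d u : cancel (@hub_label_enc d u) (@hub_label_dec d u).
Proof. by case. Qed.
HB.instance Definition _ d u :=
  Finite.copy (hub_label d u) (can_type (@hub_label_encK d u)).

Inductive one_label (d : nat) := OneMain | OneAux | OneOf of coord_hub d.
Arguments OneMain {d}. Arguments OneAux {d}. Arguments OneOf {d}.
Definition one_label_enc d (o : one_label d) : option (option (coord_hub d)) :=
  match o with OneMain => None | OneAux => Some None | OneOf h => Some (Some h) end.
Definition one_label_dec d (e : option (option (coord_hub d))) : one_label d :=
  match e with None => OneMain | Some None => OneAux | Some (Some h) => OneOf h end.
Lemma one_label_encK d : cancel (@one_label_enc d) (@one_label_dec d).
Proof. by case. Qed.
HB.instance Definition _ d := Finite.copy (one_label d) (can_type (@one_label_encK d)).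

(* [Top] normalizes the hubs, the [One] nodes have equal coordinates on all
   hubs, [Point] carries the unknowns x_a and y_ic on the hubs [XHub a] and
   [YHub i c], [Lin i c] enforces D y_ic = \sum_a N_ica x_a, and [Cross i c c']
   enforces x_c y_ic' = x_c' y_ic. *)
Inductive node_label (d : nat) :=
  Top | Point | One of one_label d | Lin of 'I_d & 'I_d | Cross of 'I_d & 'I_d & 'I_d.
Arguments Top {d}. Arguments Point {d}. Arguments One {d}.
Arguments Lin {d}. Arguments Cross {d}.
Definition node_label_enc d (x : node_label d) :
    (bool + one_label d) + ('I_d * 'I_d + 'I_d * 'I_d * 'I_d) :=
  match x with
  | Top => inl (inl false) | Point => inl (inl true) | One o => inl (inr o)
  | Lin i c => inr (inl (i, c)) | Cross i c c' => inr (inr (i, c, c'))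
  end.
Definition node_label_dec d
    (e : (bool + one_label d) + ('I_d * 'I_d + 'I_d * 'I_d * 'I_d)) : node_label d :=
  match e with
  | inl (inl false) => Top | inl (inl true) => Point | inl (inr o) => One o
  | inr (inl (i, c)) => Lin i c | inr (inr (i, c, c')) => Cross i c c'
  end.
Lemma node_label_encK d : cancel (@node_label_enc d) (@node_label_dec d).
Proof. by case. Qed.
HB.instance Definition _ d := Finite.copy (node_label d) (can_type (@node_label_encK d)).

Lemma sum_coord_hub (V : nmodType) d (F : coord_hub d -> V) :
  \sum_h F h = \sum_a F (XHub a) + \sum_i \sum_c F (YHub i c).
Proof.
rewrite (reindex (@coord_hub_dec d)) ?big_sumType /=; last first.
  by exists (@coord_hub_enc d) => h _; [apply: coord_hub_decK | apply: coord_hub_encK].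
by rewrite pair_big; congr (_ + _); apply: eq_bigr => -[].
Qed.

Definition pos_part (z : int) : nat := if z is Posz k then k else 0.
Definition neg_part (z : int) : nat := if z is Negz k then k.+1 else 0.

Lemma int_pos_neg (R : pzRingType) (z : int) :
  z%:~R = (pos_part z)%:R - (neg_part z)%:R :> R.
Proof. by case: z => k /=; rewrite ?subr0 // NegzE mulrNz sub0r. Qed.

Lemma pos_part_le (z : int) : (pos_part z <= `|z|)%N. Proof. by case: z. Qed.
Lemma neg_part_le (z : int) : (neg_part z <= `|z|)%N. Proof. by case: z. Qed.

Section RealizationGadget.
Variables (d D : nat) (N : 'I_d -> 'I_d -> 'I_d -> int) (a0 : 'I_d).

Definition units := (D + \sum_i \sum_c \sum_a `|N i c a|)%N.

Local Notation hubT := (hub_label d units).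
Local Notation nodeT := (node_label d).
Local Notation n := (gadget_dim hubT nodeT).
Local Notation hub := (@hub hubT nodeT).
Local Notation node := (@node hubT nodeT).
Local Notation ci := (@ci hubT nodeT).

(* The relation D y_ic - \sum_a N_ica x_a = 0 as a row indexed by [coord_hub d]. *)
Definition rel_coef (i c : 'I_d) (h : coord_hub d) : int :=
  match h with
  | XHub a => - N i c a
  | YHub i' c' => if (i' == i) && (c' == c) then D%:Z else 0
  end.

Lemma rel_coef_le_units i c h : (`|rel_coef i c h| <= units)%N.
Proof.
case: h => [a|i' c'] /=; last by case: ifP => _; rewrite ?leq_addr.
rewrite abszN; apply: leq_trans (leq_addl D _).
by rewrite (bigD1 i) //= (bigD1 c) //= (bigD1 a) //= -!addnA leq_addr.
Qed.

Definition main_hubs : {set hubT} := [set Main h | h : coord_hub d].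
Definition units_upto (k : nat) : {set hubT} := [set Unit j | j : 'I_units & (j < k)%N].

Lemma Main_notin_units_upto h k : Main h \notin units_upto k.
Proof. by apply/imsetP => -[]. Qed.

Lemma sum_units_upto (V : nmodType) k (F : hubT -> V) v : (k <= units)%N ->
  (forall j, F (Unit j) = v) -> \sum_(h in units_upto k) F h = v *+ k.
Proof.
move=> k_le Fv; rewrite big_imset /=; last by move=> ? ? _ _ [].
rewrite (eq_bigr (fun _ => v)) // sumr_const; congr (_ *+ _).
rewrite -sum1_card (eq_bigl (fun j : 'I_units => (j < k)%N)) => [|j]; last by rewrite inE.
by rewrite -(big_ord_widen units (fun _ => 1%N) k_le) sum1_card card_ord.
Qed.

Lemma sum_rel_coef (V : comPzRingType) i c (F : coord_hub d -> V) :
  \sum_h F h * (rel_coef i c h)%:~R =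
  D%:R * F (YHub i c) - \sum_a (N i c a)%:~R * F (XHub a).
Proof.
rewrite sum_coord_hub addrC -sumrN; congr (_ + _); last first.
  by apply: eq_bigr => a _; rewrite /= mulrNz mulrN mulrC.
rewrite (bigD1 i) //= (bigD1 c) //=.
rewrite !eqxx mulrC big1 => [|c' /negbTE c'c]; last by rewrite c'c mulr0.
rewrite big1 ?addr0 // => i' /negbTE i'i; apply: big1 => c' _.
by rewrite i'i mulr0.
Qed.

Inductive gadget_ci : ci_constraint n -> Prop :=
  | HubsOrth {h h'} of h != h' : gadget_ci (ci true (hub h) (hub h') set0)
  | TopHub h : gadget_ci (ci false (node Top) (hub h) set0)
  | TopOne o h : gadget_ci (ci true (node Top) (node (One o)) [set h])
  | TopOneNeq0 o : gadget_ci (ci false (node Top) (node (One o)) set0)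
  | OnesHub h : gadget_ci (ci true (node (One OneMain)) (node (One OneAux)) [set h])
  | PointOne : gadget_ci (ci true (node Point) (node (One OneMain)) [set Main (XHub a0)])
  | PointOneNeq0 : gadget_ci (ci false (node Point) (node (One OneMain)) set0)
  | LinUnit i c j : gadget_ci (ci true (node (Lin i c)) (node (One OneMain)) [set Unit j])
  | LinOneNeq0 i c : gadget_ci (ci false (node (Lin i c)) (node (One OneMain)) set0)
  | PointLin0 i c : gadget_ci (ci true (node Point) (node (Lin i c)) set0)
  | PointLinMain i c : gadget_ci (ci true (node Point) (node (Lin i c)) main_hubs)
  | LinNeg i c h : gadget_ci (ci true (node (Lin i c)) (node (One (OneOf h)))
      (Main h |: units_upto (neg_part (rel_coef i c h))))
  | LinPos i c h : gadget_ci (ci true (node (Lin i c)) (node (One (OneOf h)))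
      (units_upto (pos_part (rel_coef i c h))))
  | PointCross0 i c c' : gadget_ci (ci true (node Point) (node (Cross i c c')) set0)
  | PointCross {i c c' e} of e \in [:: c; c'] : gadget_ci
      (ci true (node Point) (node (Cross i c c')) [set Main (XHub e); Main (YHub i e)])
  | CrossX {i c c' e} of e \in [:: c; c'] :
      gadget_ci (ci true (node (Cross i c c')) (node (One OneMain)) [set Main (XHub e)])
  | CrossY {i c c' e} of e \in [:: c; c'] :
      gadget_ci (ci true (node (Cross i c c')) (node (One OneAux)) [set Main (YHub i e)])
  | CrossOneNeq0 i c c' :
      gadget_ci (ci false (node (Cross i c c')) (node (One OneMain)) set0).

(* Only membership in this list matters, so it is cut out of the finite type
   of all constraints by a classical test. *)
Definition gadget_constraints : seq (ci_constraint n) :=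
  [seq c <- enum {: ci_constraint n} | `[< gadget_ci c >] && ci_wf c].

Lemma gadget_constraints_wf : all (@ci_wf n) gadget_constraints.
Proof. by apply/allP => c; rewrite mem_filter => /andP[/andP[]]. Qed.

Lemma mem_gadget_constraints c :
  c \in gadget_constraints = `[< gadget_ci c >] && ci_wf c.
Proof. by rewrite mem_filter mem_enum andbT. Qed.

Section Forcing.
Variables (R : realType) (S : 'M[R]_n).
Hypothesis S_model : in_sd_model gadget_constraints S.
Local Notation s u v := (S (vidx u) (vidx v)).

Lemma gadget_sym u v : s u v = s v u.
Proof. by case: S_model => -[S_sym _] _; rewrite -[in LHS]S_sym mxE. Qed.

Lemma gadget_holds c : gadget_ci c -> ci_wf c -> constraint_holds S c.
Proof.
move=> gc wf; case: S_model => _; apply.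
by rewrite mem_gadget_constraints wf andbT; apply/asboolP.
Qed.

Lemma hub_orth h h' : h != h' -> s (hub h) (hub h') = 0.
Proof. by move=> hh'; apply/ci_true0E/gadget_holds; [apply: HubsOrth | apply: ci_wf_hubs]. Qed.

Lemma top_hub_neq0 h : s (node Top) (hub h) != 0.
Proof. by apply/ci_false0E/gadget_holds; [apply: TopHub | apply: ci_wf_node_hub]. Qed.

Lemma gadget_nodes_hold b x y A : gadget_ci (ci b (node x) (node y) A) -> x != y ->
  constraint_holds S (ci b (node x) (node y) A).
Proof. by move=> gc xy; apply: gadget_holds gc _; apply: ci_wf_nodes. Qed.

Lemma nodes_neq0 x y : gadget_ci (ci false (node x) (node y) set0) -> x != y ->
  s (node x) (node y) != 0.
Proof. by move=> gc /(gadget_nodes_hold gc)/ci_false0E. Qed.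

Lemma nodes_eq0 x y : gadget_ci (ci true (node x) (node y) set0) -> x != y ->
  s (node x) (node y) = 0.
Proof. by move=> gc /(gadget_nodes_hold gc)/ci_true0E. Qed.

Lemma hub_diag_neq0 h : s (hub h) (hub h) != 0.
Proof.
have := gadget_nodes_hold (TopOne OneMain h) isT.
rewrite /constraint_holds /ci imset_set1 => /ci_holds_set1_neq0; apply.
exact: nodes_neq0 (TopOneNeq0 _) isT.
Qed.

Lemma nodes_ciE x y A : gadget_ci (ci true (node x) (node y) A) -> x != y ->
  s (node x) (node y) =
  \sum_(h in A) s (node x) (hub h) * s (hub h) (node y) / s (hub h) (hub h).
Proof. by move=> gc /(gadget_nodes_hold gc)/(ci_trueE hub_orth hub_diag_neq0). Qed.

Definition hub_scale h := s (node Top) (hub h).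
Definition hcoord u h := s u (hub h) / hub_scale h.
Definition one_cov o := s (node Top) (node (One o)).
Definition common_scale :=
  one_cov OneMain * one_cov OneAux / s (node (One OneMain)) (node (One OneAux)).

Lemma hub_one o h : s (hub h) (node (One o)) = one_cov o * s (hub h) (hub h) / hub_scale h.
Proof.
rewrite /one_cov (nodes_ciE (TopOne o h) isT) big_set1 /hub_scale.
by field; rewrite hub_diag_neq0 top_hub_neq0.
Qed.

Lemma hub_diag_scale h : s (hub h) (hub h) * common_scale = hub_scale h ^+ 2.
Proof.
have := nodes_ciE (OnesHub h) isT; rewrite big_set1 (gadget_sym _ (hub h)) !hub_one.
move=> ones_eq; rewrite /common_scale ones_eq.
by field; rewrite hub_diag_neq0 top_hub_neq0 !(nodes_neq0 (TopOneNeq0 _)).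
Qed.

Lemma common_scale_neq0 : common_scale != 0.
Proof.
have := expf_neq0 2 (top_hub_neq0 (Main (XHub a0))).
by apply: contraNneq => m0; rewrite -hub_diag_scale m0 mulr0.
Qed.

Lemma hub_diagE h : s (hub h) (hub h) = hub_scale h ^+ 2 / common_scale.
Proof. by rewrite -hub_diag_scale mulfK ?common_scale_neq0. Qed.

Lemma nodes_gramE x y A : gadget_ci (ci true (node x) (node y) A) -> x != y ->
  s (node x) (node y) =
  common_scale * \sum_(h in A) hcoord (node x) h * hcoord (node y) h.
Proof.
move=> gc xy; rewrite (nodes_ciE gc xy) mulr_sumr; apply: eq_bigr => h _.
rewrite hub_diagE (gadget_sym (hub h)) /hcoord.
by field; rewrite common_scale_neq0 top_hub_neq0.
Qed.

Lemma hcoord_one o h : hcoord (node (One o)) h = one_cov o / common_scale.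
Proof.
rewrite /hcoord gadget_sym hub_one hub_diagE.
by field; rewrite common_scale_neq0 top_hub_neq0.
Qed.

Lemma node_one_gramE x o A : gadget_ci (ci true (node x) (node (One o)) A) ->
  x != One o -> s (node x) (node (One o)) = one_cov o * \sum_(h in A) hcoord (node x) h.
Proof.
move=> gc xo; rewrite (nodes_gramE gc xo) !mulr_sumr; apply: eq_bigr => h _.
by rewrite hcoord_one; field; rewrite common_scale_neq0.
Qed.

Definition xcoord a := hcoord (node Point) (Main (XHub a)).
Definition ycoord i c := hcoord (node Point) (Main (YHub i c)).

Lemma one_cov_neq0 o : one_cov o != 0.
Proof. exact: nodes_neq0 (TopOneNeq0 o) isT. Qed.

Lemma xcoord_a0_neq0 : xcoord a0 != 0.
Proof.
have := nodes_neq0 PointOneNeq0 isT.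
by rewrite (node_one_gramE PointOne isT) big_set1 mulf_eq0 negb_or => /andP[].
Qed.

(* The unit hubs all carry the same coordinate [u] of [Lin i c]; comparing
   the two conditioning sets of [LinNeg] and [LinPos] writes the coordinate
   on [Main h] as an integer multiple of [u]. *)
Lemma lin_hcoord i c : exists2 u, u != 0 &
  forall h, hcoord (node (Lin i c)) (Main h) = (rel_coef i c h)%:~R * u.
Proof.
pose u := s (node (Lin i c)) (node (One OneMain)) / one_cov OneMain.
have unit_u j : hcoord (node (Lin i c)) (Unit j) = u.
  by rewrite /u (node_one_gramE (LinUnit i c j) isT) big_set1 mulrC mulKf ?one_cov_neq0.
exists u => [|h].
  by rewrite mulf_neq0 ?invr_eq0 ?one_cov_neq0 ?(nodes_neq0 (LinOneNeq0 i c)).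
have pos_le := leq_trans (pos_part_le _) (rel_coef_le_units i c h).
have neg_le := leq_trans (neg_part_le _) (rel_coef_le_units i c h).
have := node_one_gramE (LinPos i c h) isT.
rewrite (node_one_gramE (LinNeg i c h) isT) big_setU1 ?Main_notin_units_upto //=.
rewrite !(sum_units_upto _ unit_u) // => /(mulfI (one_cov_neq0 _)).
by rewrite int_pos_neg mulrBl !mulr_natl => <-; rewrite addrK.
Qed.

Lemma lin_relation i c : D%:R * ycoord i c = \sum_a (N i c a)%:~R * xcoord a.
Proof.
have [u u_neq0 lin_main] := lin_hcoord i c.
have := nodes_eq0 (PointLin0 i c) isT.
rewrite (nodes_gramE (PointLinMain i c) isT) => /eqP.
rewrite mulf_eq0 (negbTE common_scale_neq0) /= /main_hubs big_imset /=; last first.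
  by move=> ? ? _ _ [].
rewrite (eq_bigr (fun h => hcoord (node Point) (Main h) * (rel_coef i c h)%:~R * u)).
  by rewrite -mulr_suml sum_rel_coef mulf_eq0 (negbTE u_neq0) orbF subr_eq0 => /eqP.
by move=> h _; rewrite lin_main mulrA.
Qed.

Lemma cross_relation i c c' : xcoord c * ycoord i c' = xcoord c' * ycoord i c.
Proof.
pose V := node (Cross i c c').
pose sigma := s V (node (One OneMain)) / one_cov OneMain.
pose tau := s V (node (One OneAux)) / one_cov OneAux.
have sigma_neq0 : sigma != 0.
  by rewrite mulf_neq0 ?invr_eq0 ?one_cov_neq0 ?(nodes_neq0 (CrossOneNeq0 i c c')).
have hsigma e (ce : e \in [:: c; c']) : hcoord V (Main (XHub e)) = sigma.
  by rewrite /sigma (node_one_gramE (CrossX ce) isT) big_set1 mulrC mulKf ?one_cov_neq0.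
have htau e (ce : e \in [:: c; c']) : hcoord V (Main (YHub i e)) = tau.
  by rewrite /tau (node_one_gramE (CrossY ce) isT) big_set1 mulrC mulKf ?one_cov_neq0.
have point e (ce : e \in [:: c; c']) : xcoord e * sigma = - (ycoord i e * tau).
  have := nodes_eq0 (PointCross0 i c c') isT.
  rewrite (nodes_gramE (PointCross ce) isT) big_setU1 ?inE //= big_set1.
  move=> /eqP; rewrite mulf_eq0 (negbTE common_scale_neq0) addr_eq0 => /eqP.
  by rewrite hsigma ?htau.
apply: (mulIf sigma_neq0); rewrite [LHS]mulrAC [RHS]mulrAC.
by rewrite !point ?mem_head ?inE ?eqxx ?orbT //; ring.
Qed.

End Forcing.

Section Witness.
Variables (R : realType) (x : 'I_d -> R) (y : 'I_d -> 'I_d -> R) (lam : 'I_d -> R).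
Hypothesis x_a0_neq0 : x a0 != 0.
Hypothesis y_lam : forall i c, y i c = lam i * x c.
Hypothesis lam_neq0 : forall i, lam i != 0.
Hypothesis y_rel : forall i c, D%:R * y i c = \sum_a (N i c a)%:~R * x a.

Definition witness_hub (u : nodeT) (h : hubT) : R :=
  match u, h with
  | Top, _ | One _, _ => 1
  | Point, Main (XHub a) => x a
  | Point, Main (YHub i c) => y i c
  | Lin i c, Main h => (rel_coef i c h)%:~R
  | Lin _ _, Unit _ => 1
  | Cross _ c c', Main (XHub e) => (e \in [:: c; c'])%:R
  | Cross i c c', Main (YHub i' e) => ((i' == i) && (e \in [:: c; c']))%:R * - (lam i)^-1
  | _, _ => 0
  end.

Definition witness_cov (u v : nodeT) : R :=
  match u, v with
  | Top, One _ | One OneMain, One OneAux | Lin _ _, One OneMain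
  | Cross _ _ _, One OneMain => 1
  | Point, One OneMain => x a0
  | Lin i c, One (OneOf h) => (pos_part (rel_coef i c h))%:R
  | Cross i _ _, One OneAux => - (lam i)^-1
  | _, _ => 0
  end.

Local Notation W := (gram witness_hub witness_cov).

Lemma witness_ci u v (A : {set hubT}) : u != v ->
  witness_cov u v + witness_cov v u = \sum_(h in A) witness_hub u h * witness_hub v h ->
  constraint_holds W (ci true (node u) (node v) A).
Proof. by move=> uv /(gram_ci_nodesE _ _ _ uv). Qed.

Lemma witness_ci_false u v : u != v -> witness_cov u v + witness_cov v u != 0 ->
  constraint_holds W (ci false (node u) (node v) set0).
Proof. by move=> uv cov_neq0; apply/ci_false0E; rewrite gram_nodes. Qed.

Lemma witness_point_lin i c :
  \sum_(h in main_hubs) witness_hub Point h * witness_hub (Lin i c) h = 0.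
Proof.
rewrite big_imset /=; last by move=> ? ? _ _ [].
rewrite (eq_bigr (fun h => witness_hub Point (Main h) * (rel_coef i c h)%:~R)) //.
by rewrite sum_rel_coef y_rel subrr.
Qed.

Lemma witness_units_upto i c h k : (k <= units)%N ->
  \sum_(h' in units_upto k) witness_hub (Lin i c) h' * witness_hub (One (OneOf h)) h'
  = k%:R.
Proof. by move=> k_le; rewrite (sum_units_upto _ (v := 1)) // => j; rewrite mulr1. Qed.

Lemma gadget_witness : in_sd_model gadget_constraints W.
Proof.
split=> [|ct]; first exact: gram_psd.
rewrite mem_gadget_constraints => /andP[/asboolP gc _]; case: gc.
- by move=> h h' hh'; apply/ci_true0E; rewrite gram_hubs (negbTE hh').
- by move=> h; apply/ci_false0E; rewrite gram_node_hub oner_neq0.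
- by move=> o h; apply: witness_ci; rewrite // big_set1; case: o => *; rewrite /= addr0 mulr1.
- by move=> o; apply: witness_ci_false; rewrite //; case: o => *; rewrite /= addr0 oner_neq0.
- by move=> h; apply: witness_ci; rewrite // big_set1 /= addr0 mulr1.
- by apply: witness_ci; rewrite // big_set1 /= addr0 mulr1.
- by apply: witness_ci_false; rewrite //= addr0.
- by move=> i c j; apply: witness_ci; rewrite // big_set1 /= addr0 mulr1.
- by move=> i c; apply: witness_ci_false; rewrite //= addr0 oner_neq0.
- by move=> i c; apply: witness_ci; rewrite // big_set0 /= addr0.
- by move=> i c; apply: witness_ci; rewrite // witness_point_lin /= addr0.
- move=> i c h; apply: witness_ci; rewrite // big_setU1 ?Main_notin_units_upto //=.
  rewrite witness_units_upto ?(leq_trans (neg_part_le _) (rel_coef_le_units _ _ _)) //.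
  by rewrite addr0 mulr1 int_pos_neg subrK.
- move=> i c h; apply: witness_ci; rewrite // witness_units_upto ?addr0 //.
  exact: leq_trans (pos_part_le _) (rel_coef_le_units _ _ _).
- by move=> i c c'; apply: witness_ci; rewrite // big_set0 /= addr0.
- move=> i c c' e ce; apply: witness_ci; rewrite // big_setU1 ?inE // big_set1 /=.
  by rewrite ce eqxx y_lam /= addr0; field; rewrite lam_neq0.
- by move=> i c c' e ce; apply: witness_ci; rewrite // big_set1 /= ce addr0 mulr1.
- by move=> i c c' e ce; apply: witness_ci; rewrite // big_set1 /= ce eqxx addr0 !mulr1 mul1r.
- by move=> i c c'; apply: witness_ci_false; rewrite //= addr0 oner_neq0.
Qed.

End Witness.

End RealizationGadget.

(** * Embeddings from coordinate functionals *)

Lemma common_denominator (T : finType) (q : T -> rat) :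
  exists2 D : nat, (0 < D)%N & exists N : T -> int, forall t, (N t)%:~R = D%:R * q t.
Proof.
pose D := (\prod_t `|denq (q t)|)%N.
have denqE t : `|denq (q t)|%:R = (denq (q t))%:~R :> rat.
  by rewrite -[X in _ = X%:~R]gtz0_abs ?denq_gt0.
exists D; first by rewrite prodn_gt0 // => t; rewrite absz_gt0 denq_neq0.
exists (fun t => numq (q t) * (\prod_(t' | t' != t) `|denq (q t')|)%N%:Z) => t.
have -> : D = (`|denq (q t)| * \prod_(t' | t' != t) `|denq (q t')|)%N.
  by rewrite /D (bigD1 t).
by rewrite rmorphM /= numqE natrM denqE -pmulrn; ring.
Qed.

Section NormalizedFunctional.
Variables (K : pzRingType) (R : fieldType) (L Lam : K -> R).
Hypothesis L_zmod : zmod_morphism L.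
Hypothesis L_mul : forall u w, L (u * w) = Lam u * L w.
Hypothesis L1_neq0 : L 1 != 0.

Definition normalized w := L w / L 1.

Lemma normalized_zmod : zmod_morphism normalized.
Proof. by move=> u w; rewrite /normalized L_zmod mulrBl. Qed.

Lemma normalized_monoid : monoid_morphism normalized.
Proof.
split=> [|u w]; first by rewrite /normalized divff.
have Lu : L u = Lam u * L 1 by rewrite -L_mul mulr1.
by rewrite /normalized L_mul Lu; field.
Qed.

Definition normalized_rmorphism : {rmorphism K -> R} :=
  HB.pack_for {rmorphism K -> R} normalized
    (GRing.isZmodMorphism.Build K R normalized normalized_zmod)
    (GRing.isMonoidMorphism.Build K R normalized normalized_monoid).

End NormalizedFunctional.

Section CoordinateFunctional.
Variables (R : numFieldType) (K : fieldExtType rat).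
Local Notation d := (\dim {:K}).
Local Notation B := (vbasis {:K}).
Variables (x : 'I_d -> R) (a0 : 'I_d).
Hypothesis x_a0_neq0 : x a0 != 0.

Definition coord_fun (w : K) : R := \sum_a ratr (coord B a w) * x a.

Lemma coord_fun_sum (F : 'I_d -> K) : coord_fun (\sum_i F i) = \sum_i coord_fun (F i).
Proof.
rewrite /coord_fun exchange_big; apply: eq_bigr => a _.
by rewrite raddf_sum rmorph_sum mulr_suml.
Qed.

Lemma coord_fun_zmod : zmod_morphism coord_fun.
Proof.
move=> u w; rewrite /coord_fun -sumrB; apply: eq_bigr => a _.
by rewrite raddfB rmorphB mulrBl.
Qed.

Lemma coord_funZ q w : coord_fun (q *: w) = ratr q * coord_fun w.
Proof.
by rewrite /coord_fun mulr_sumr; apply: eq_bigr => a _; rewrite linearZ rmorphM mulrA.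
Qed.

Lemma coord_fun_basis (c : 'I_d) : coord_fun B`_c = x c.
Proof.
have freeB : free B by apply: basis_free (vbasisP _).
rewrite /coord_fun (bigD1 c) //= coord_free // eqxx rmorph1 mul1r big1 ?addr0 // => a ac.
by rewrite coord_free // eq_sym (negbTE ac) rmorph0 mul0r.
Qed.

Lemma coord_fun_expand (F : 'I_d -> K) w :
  coord_fun (\sum_c coord B c w *: F c) = \sum_c ratr (coord B c w) * coord_fun (F c).
Proof. by rewrite coord_fun_sum; apply: eq_bigr => c _; rewrite coord_funZ. Qed.

Hypothesis x_cross : forall i c c' : 'I_d,
  x c * coord_fun (B`_i * B`_c') = x c' * coord_fun (B`_i * B`_c).

Let lam (i : 'I_d) := coord_fun (B`_i * B`_a0) / x a0.

Definition coord_mul (u : K) : R := \sum_i ratr (coord B i u) * lam i.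

(* The cross relations say that [w |-> coord_fun (B_i * w)] is proportional to
   [coord_fun] on the basis, hence everywhere. *)
Lemma coord_fun_basis_mul (i : 'I_d) w : coord_fun (B`_i * w) = lam i * coord_fun w.
Proof.
rewrite {1}(coord_vbasis (memvf w)) mulr_sumr.
under eq_bigr do rewrite -scalerAr.
rewrite coord_fun_expand [in RHS]/coord_fun mulr_sumr; apply: eq_bigr => c _.
rewrite mulrCA; congr (_ * _).
by rewrite /lam mulrAC [_ * x c]mulrC x_cross mulrAC divff ?mul1r.
Qed.

Lemma coord_fun_mul u w : coord_fun (u * w) = coord_mul u * coord_fun w.
Proof.
rewrite {1}(coord_vbasis (memvf u)) mulr_suml.
under eq_bigr do rewrite -scalerAl.
rewrite coord_fun_expand /coord_mul mulr_suml; apply: eq_bigr => i _.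
by rewrite coord_fun_basis_mul mulrA.
Qed.

Lemma coord_fun1_neq0 : coord_fun 1 != 0.
Proof.
have := coord_fun_mul B`_a0 1; rewrite mulr1 coord_fun_basis => x_a0E.
by apply: contraNneq x_a0_neq0 => L1_0; rewrite x_a0E L1_0 mulr0 eqxx.
Qed.

Definition coord_rmorphism : {rmorphism K -> R} :=
  normalized_rmorphism coord_fun_zmod coord_fun_mul coord_fun1_neq0.

End CoordinateFunctional.

Lemma coord_fun_gen_subfield (R : numFieldType) (K : fieldExtType rat) (A : R -> Prop)
    (x : 'I_(\dim {:K}) -> R) w :
  (forall a, x a \in gen_subfield A) -> coord_fun x w \in gen_subfield A.
Proof. by move=> xA; apply: rpred_sum => a _; rewrite rpredM ?rpred_rat. Qed.

Lemma structure_constants (K : fieldExtType rat) :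
  let B := vbasis {:K} in
  exists2 D : nat, (0 < D)%N &
    exists N : 'I_(\dim {:K}) -> 'I_(\dim {:K}) -> 'I_(\dim {:K}) -> int,
      forall i c a, (N i c a)%:~R = D%:R * coord B a (B`_i * B`_c).
Proof.
move=> B; have [D D_gt0 [N N_struct]] :=
  common_denominator (fun t : 'I_(\dim {:K}) * 'I_(\dim {:K}) * 'I_(\dim {:K}) =>
    coord B t.2 (B`_t.1.1 * B`_t.1.2)).
by exists D => //; exists (fun i c a => N (i, c, a)) => i c a; apply: N_struct (i, c, a).
Qed.

Section Realization.
Variables (R : realType) (K : fieldExtType rat).
Local Notation d := (\dim {:K}).
Local Notation B := (vbasis {:K}).
Variables (D : nat) (N : 'I_d -> 'I_d -> 'I_d -> int) (a0 : 'I_d).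
Hypothesis N_struct : forall i c a, (N i c a)%:~R = D%:R * coord B a (B`_i * B`_c).

Lemma coord_fun_struct (x : 'I_d -> R) (i c : 'I_d) :
  D%:R * coord_fun x (B`_i * B`_c) = \sum_a (N i c a)%:~R * x a.
Proof.
rewrite /coord_fun mulr_sumr; apply: eq_bigr => a _.
by rewrite mulrA -(ratr_nat R D) -rmorphM /= -N_struct ratr_int.
Qed.

Lemma rmorph_coord_fun (phi : {rmorphism K -> R}) w :
  phi w = coord_fun (fun a => phi B`_a) w.
Proof.
rewrite {1}(coord_vbasis (memvf w)) rmorph_sum; apply: eq_bigr => a _.
by rewrite rmorphZ_num.
Qed.

Lemma gadget_realizable (phi : {rmorphism K -> R}) :
  exists S : 'M[R]_(gadget_dim _ _), in_sd_model (gadget_constraints D N a0) S.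
Proof.
have phiB_neq0 (a : 'I_d) : phi B`_a != 0.
  rewrite fmorph_eq0; apply: (free_not0 (basis_free (vbasisP fullv))).
  by apply: mem_nth; rewrite size_tuple.
eexists; apply: (@gadget_witness _ _ _ _ _ (fun a => phi B`_a)
  (fun i c => phi (B`_i * B`_c)) (fun i => phi B`_i)) => // i c.
- exact: rmorphM.
- by rewrite rmorph_coord_fun coord_fun_struct.
Qed.

Hypothesis D_gt0 : (0 < D)%N.

Lemma gadget_model_embeds S : in_sd_model (gadget_constraints D N a0) S ->
  exists g : {rmorphism K -> R}, forall w, in_gen_subfield (entries S) (g w).
Proof.
move=> S_model; pose x := xcoord S.
have y_fun (i c : 'I_d) : ycoord S i c = coord_fun x (B`_i * B`_c).
  apply: (mulfI (_ : D%:R != 0)); first by rewrite pnatr_eq0 -lt0n.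
  by rewrite (lin_relation S_model) coord_fun_struct.
have x_cross (i c c' : 'I_d) :
    x c * coord_fun x (B`_i * B`_c') = x c' * coord_fun x (B`_i * B`_c).
  by rewrite -!y_fun (cross_relation S_model).
have x_gen a : x a \in gen_subfield (entries S) by rewrite rpred_div ?gen_subfield_entry.
exists (coord_rmorphism (xcoord_a0_neq0 S_model) x_cross) => w; apply/gen_subfieldP.
by rewrite [_ w]/= /normalized rpred_div ?coord_fun_gen_subfield.
Qed.

End Realization.

Theorem corollary6p2 (R : realType) (K : fieldExtType rat) :
  (exists phi : {rmorphism K -> R}, True) ->
  exists (n : nat) (I : seq (ci_constraint n)),
    [/\ all (@ci_wf n) I,
        exists S : 'M[R]_n, in_sd_model I S
      & forall S : 'M[R]_n, in_sd_model I S ->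
          exists g : {rmorphism K -> R},
            forall x : K, in_gen_subfield (entries S) (g x)].
Proof.
case=> phi _.
have [D D_gt0 [N N_struct]] := structure_constants K.
exists _, (gadget_constraints D N (Ordinal (adim_gt0 {:K}%AS))); split.
- exact: gadget_constraints_wf.
- exact: gadget_realizable N_struct phi.
- exact: gadget_model_embeds N_struct D_gt0.
Qed.
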